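(* Let $k_0\in\mathbb{R}\setminus\{0\}$ and let $z\in C^2([-1,1])$ be a complex-valued function with $z(x)\neq0$ for all $x\in[-1,1]$ satisfying $$z(\pm1)=1,\qquad z'(\pm1)=\pm ik_0,\qquad \int_{-1}^{1}z^2(x)\,dx=\frac{1}{ik_0}.$$ Define $U(x)=\dfrac{z''(x)+k_0^2z(x)}{z(x)}$ for $|x|<1$ and $U(x)=0$ for $|x|\ge1$, and let $\psi(x)=z(x)$ for $|x|\le 1$, $\psi(x)=e^{ik_0(|x|-1)}$ for $|x|\ge1$. Then $\psi$ is a nontrivial solution of $-\psi''+U\psi=k_0^2\psi$ on $|x|<1$ with $\psi=\alpha_\pm e^{ik_0|x|}$ for $\pm x\ge1$ (here $\alpha_\pm=e^{-ik_0}$), and there exist constants $\beta_\pm\in\mathbb{C}$ and $\phi\in C^1(\mathbb{R})$ with $$-\phi''+U(x)\phi-k_0^2\phi=2k_0\psi\quad(|x|<1),\qquad \phi(x)=\big(i\alpha_\pm|x|+\beta_\pm\big)e^{ik_0|x|}\quad(\pm x\ge1).$$ That is, $U$ has a spectral singularity of the second order at $k=k_0$.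
   Context: A spectral singularity at real $k_0\neq0$ of $-\frac{d^2}{dx^2}+U(x)$ (with $U$ vanishing outside $[-1,1]$) means that $-\psi''+U\psi=k_0^2\psi$, $\psi=\alpha_\pm e^{ik_0|x|}$ for $\pm x\ge1$, has a nontrivial $C^1$ solution; it is of the second order when, in addition, the inhomogeneous problem for $\phi$ stated in the claim has a $C^1(\mathbb{R})$ solution. *)

From Stdlib Require Import Reals.
From Coquelicot Require Import Coquelicot.

Open Scope R_scope.

Definition eix (t : R) : C := (cos t, sin t).

(* f' is the derivative of f at x relative to the set D (one-sided at
   boundary points of an interval; the ordinary derivative when x is an
   interior point of D). *)
Definition has_deriv_within (D : R -> Prop) (f f' : R -> C) (x : R) : Prop :=
  forall eps : R, 0 < eps -> exists delta : R, 0 < delta /\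
    forall y : R, D y -> Rabs (y - x) < delta ->
      Cmod (Cminus (Cminus (f y) (f x)) (Cmult (RtoC (y - x)) (f' x)))
        <= eps * Rabs (y - x).

Definition cont_within (D : R -> Prop) (f : R -> C) : Prop :=
  forall x : R, D x -> forall eps : R, 0 < eps -> exists delta : R, 0 < delta /\
    forall y : R, D y -> Rabs (y - x) < delta -> Cmod (Cminus (f y) (f x)) < eps.

Definition Icc11 (x : R) : Prop := -1 <= x <= 1.
Definition everywhere (x : R) : Prop := True.

Definition C1_with (f f' : R -> C) : Prop :=
  (forall x, has_deriv_within everywhere f f' x) /\ cont_within everywhere f'.

Definition U_of (k0 : R) (z z2 : R -> C) (x : R) : C :=
  if Rlt_dec (Rabs x) 1
  then Cdiv (Cplus (z2 x) (Cmult (RtoC (k0 ^ 2)) (z x))) (z x)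
  else RtoC 0.

Definition psi_of (k0 : R) (z : R -> C) (x : R) : C :=
  if Rle_dec (Rabs x) 1 then z x else eix (k0 * (Rabs x - 1)).

(* Reduction of order.  On [-1,1] put phi = z v.  The Wronskian W = z phi' - z' phi = z^2 v'
   satisfies W' = z phi'' - z'' phi, so phi solves -phi'' + U phi - k0^2 phi = 2 k0 z exactly when
   W' = -2 k0 z^2.  Hence take W(x) = -i - 2 k0 int_{-1}^x z^2 and v(x) = int_{-1}^x W / z^2.
   At x = -1 this gives phi = 0 and phi' = W(-1) = -i, the Cauchy data of i(-x-1) e^{i k0 (-x-1)};
   at x = 1 the normalisation int z^2 = 1/(i k0) gives W(1) = i, hence phi(1) = v(1) and
   phi'(1) = i k0 v(1) + i, the Cauchy data of (i(x-1) + v(1)) e^{i k0 (x-1)}.  Gluing the three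
   pieces gives phi in C^1(R); psi is glued in the same way from z and e^{i k0 (|x|-1)}, using
   z(+-1) = 1 and z'(+-1) = +-i k0. *)

From Stdlib Require Import Reals Lra.
From Coquelicot Require Import Coquelicot.

Open Scope R_scope.

(* At a point x, [has_deriv_within D f f' x] and [cont_within D f] unfold to statements of the
   form [forall eps, 0 < eps -> near D x _]. *)
Definition near (D : R -> Prop) (x : R) (P : R -> Prop) : Prop :=
  exists delta : R, 0 < delta /\ forall y, D y -> Rabs (y - x) < delta -> P y.

Definition tends (D : R -> Prop) (x : R) (f : R -> C) (l : C) : Prop :=
  forall eps : R, 0 < eps -> near D x (fun y => Cmod (Cminus (f y) l) < eps).

Lemma near_forall D x (P : R -> Prop) : (forall y, D y -> P y) -> near D x P.
Proof. intros HP. exists 1. split; [lra | auto]. Qed.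

Lemma near_impl D x (P Q : R -> Prop) :
  (forall y, D y -> P y -> Q y) -> near D x P -> near D x Q.
Proof. intros HPQ [d [Hd HP]]. exists d. split; auto. Qed.

Lemma near_and D x P Q : near D x P -> near D x Q -> near D x (fun y => P y /\ Q y).
Proof.
  intros [d1 [Hd1 HP]] [d2 [Hd2 HQ]]. exists (Rmin d1 d2). split.
  - now apply Rmin_pos.
  - intros y Dy Hy. split.
    + apply HP; auto. eapply Rlt_le_trans; [exact Hy | apply Rmin_l].
    + apply HQ; auto. eapply Rlt_le_trans; [exact Hy | apply Rmin_r].
Qed.

Lemma near_union A B x P :
  near A x P -> near B x P -> near (fun y => A y \/ B y) x P.
Proof.
  intros [d1 [Hd1 HA]] [d2 [Hd2 HB]]. exists (Rmin d1 d2). split.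
  - now apply Rmin_pos.
  - intros y [Ay | By] Hy.
    + apply HA; auto. eapply Rlt_le_trans; [exact Hy | apply Rmin_l].
    + apply HB; auto. eapply Rlt_le_trans; [exact Hy | apply Rmin_r].
Qed.

Lemma near_subdomain D E x P : (forall y, E y -> D y) -> near D x P -> near E x P.
Proof. intros HED [d [Hd HP]]. exists d. split; auto. Qed.

Lemma near_restrict D E x P : near E x D -> near D x P -> near E x P.
Proof.
  intros [d1 [Hd1 HD]] [d2 [Hd2 HP]]. exists (Rmin d1 d2). split.
  - now apply Rmin_pos.
  - intros y Ey Hy. apply HP.
    + apply HD; auto. eapply Rlt_le_trans; [exact Hy | apply Rmin_l].
    + eapply Rlt_le_trans; [exact Hy | apply Rmin_r].
Qed.

Lemma near_of_gap D x P d :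
  0 < d -> (forall y, D y -> d <= Rabs (y - x)) -> near D x P.
Proof. intros Hd Hgap. exists d. split; auto. intros y Dy Hy. specialize (Hgap y Dy). lra. Qed.

Definition Ici1 (y : R) : Prop := 1 <= y.
Definition Iicm1 (y : R) : Prop := y <= -1.

Lemma near_glue x P :
  (Iicm1 x -> near Iicm1 x P) -> (Icc11 x -> near Icc11 x P) -> (Ici1 x -> near Ici1 x P) ->
  near everywhere x P.
Proof.
  unfold Iicm1, Icc11, Ici1. intros HL HM HR.
  assert (HL' : near Iicm1 x P).
  { destruct (Rle_dec x (-1)); [now apply HL |].
    apply (near_of_gap _ _ _ (x + 1)); [lra |].
    intros y Hy. unfold Iicm1 in Hy. rewrite Rabs_left1; lra. }
  assert (HR' : near Ici1 x P).
  { destruct (Rle_dec 1 x); [now apply HR |].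
    apply (near_of_gap _ _ _ (1 - x)); [lra |].
    intros y Hy. unfold Ici1 in Hy. rewrite Rabs_right; lra. }
  assert (HM' : near Icc11 x P).
  { destruct (Rle_dec (-1) x), (Rle_dec x 1); try (apply HM; lra).
    - apply (near_of_gap _ _ _ (x - 1)); [lra |].
      intros y Hy. unfold Icc11 in Hy. rewrite Rabs_left1; lra.
    - apply (near_of_gap _ _ _ (-1 - x)); [lra |].
      intros y Hy. unfold Icc11 in Hy. rewrite Rabs_right; lra. }
  eapply near_subdomain; [| exact (near_union _ _ _ _ HL' (near_union _ _ _ _ HM' HR'))].
  intros y _. unfold Iicm1, Icc11, Ici1. lra.
Qed.

Lemma tends_ext D x f g l : near D x (fun y => f y = g y) -> tends D x f l -> tends D x g l.
Proof.
  intros Hfg Hf eps Heps. apply (near_impl D x (fun y => f y = g y /\ Cmod (Cminus (f y) l) < eps)).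
  - intros y _ [E H]. now rewrite <- E.
  - now apply near_and, Hf.
Qed.

Lemma tends_const D x (c : C) : tends D x (fun _ => c) c.
Proof.
  intros eps Heps. apply near_forall. intros y _.
  replace (Cminus c c) with (RtoC 0) by ring. now rewrite Cmod_0.
Qed.

Lemma tends_shift D x : tends D x (fun y => RtoC (y - x)) (RtoC 0).
Proof.
  intros eps Heps. exists eps. split; auto. intros y _ Hy.
  replace (Cminus (RtoC (y - x)) (RtoC 0)) with (RtoC (y - x)) by ring.
  now rewrite Cmod_R.
Qed.

Lemma tends_opp D x f l : tends D x f l -> tends D x (fun y => Copp (f y)) (Copp l).
Proof.
  intros Hf eps Heps. apply (near_impl D x (fun y => Cmod (Cminus (f y) l) < eps)); auto.
  intros y _ H. replace (Cminus (Copp (f y)) (Copp l)) with (Copp (Cminus (f y) l)) by ring.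
  now rewrite Cmod_opp.
Qed.

Lemma tends_plus D x f g a b :
  tends D x f a -> tends D x g b -> tends D x (fun y => Cplus (f y) (g y)) (Cplus a b).
Proof.
  intros Hf Hg eps Heps.
  apply (near_impl D x (fun y => Cmod (Cminus (f y) a) < eps / 2 /\ Cmod (Cminus (g y) b) < eps / 2)).
  - intros y _ [Ha Hb].
    replace (Cminus (Cplus (f y) (g y)) (Cplus a b))
      with (Cplus (Cminus (f y) a) (Cminus (g y) b)) by ring.
    eapply Rle_lt_trans; [apply Cmod_triangle | lra].
  - apply near_and; [apply Hf | apply Hg]; lra.
Qed.

Lemma tends_mult D x f g a b :
  tends D x f a -> tends D x g b -> tends D x (fun y => Cmult (f y) (g y)) (Cmult a b).
Proof.
  intros Hf Hg eps Heps.
  set (K := 1 + Cmod a + Cmod b).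
  assert (HK : 0 < K) by (unfold K; generalize (Cmod_ge_0 a) (Cmod_ge_0 b); lra).
  set (e := Rmin 1 (eps / K)).
  assert (He : 0 < e) by (apply Rmin_pos; [lra | now apply Rdiv_lt_0_compat]).
  assert (He1 : e <= 1) by apply Rmin_l.
  assert (HeK : e * K <= eps).
  { apply (Rmult_le_reg_r (/ K)); [now apply Rinv_0_lt_compat |].
    rewrite Rmult_assoc, Rinv_r by lra. rewrite Rmult_1_r. apply Rmin_r. }
  apply (near_impl D x (fun y => Cmod (Cminus (f y) a) < e /\ Cmod (Cminus (g y) b) < e)).
  - intros y _ [Ha Hb].
    replace (Cminus (Cmult (f y) (g y)) (Cmult a b)) with
      (Cplus (Cmult (Cminus (f y) a) (Cminus (g y) b))
             (Cplus (Cmult a (Cminus (g y) b)) (Cmult (Cminus (f y) a) b))) by ring.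
    eapply Rle_lt_trans; [apply Cmod_triangle |].
    eapply Rle_lt_trans; [apply Rplus_le_compat_l, Cmod_triangle |].
    rewrite !Cmod_mult. unfold K in HeK.
    generalize (Cmod_ge_0 a) (Cmod_ge_0 b) (Cmod_ge_0 (Cminus (f y) a)) (Cmod_ge_0 (Cminus (g y) b)).
    intros. nra.
  - now apply near_and; [apply Hf | apply Hg].
Qed.

Lemma tends_inv D x f a : a <> RtoC 0 -> tends D x f a -> tends D x (fun y => Cinv (f y)) (Cinv a).
Proof.
  intros Ha Hf eps Heps.
  assert (HA : 0 < Cmod a) by now apply Cmod_gt_0.
  set (e := Rmin (Cmod a / 2) (eps * (Cmod a * Cmod a) / 2)).
  assert (He : 0 < e)
    by (apply Rmin_pos; [lra | apply Rdiv_lt_0_compat; [apply Rmult_lt_0_compat; nra | lra]]).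
  assert (He1 : e <= Cmod a / 2) by apply Rmin_l.
  assert (He2 : e <= eps * (Cmod a * Cmod a) / 2) by apply Rmin_r.
  apply (near_impl D x (fun y => Cmod (Cminus (f y) a) < e)); [| now apply Hf].
  intros y _ Hy.
  assert (Hfy : Cmod a / 2 < Cmod (f y)).
  { assert (Cmod a <= Cmod (f y) + Cmod (Cminus a (f y))).
    { replace a with (Cplus (f y) (Cminus a (f y))) at 1 by ring. apply Cmod_triangle. }
    replace (Cminus a (f y)) with (Copp (Cminus (f y) a)) in H by ring.
    rewrite Cmod_opp in H. lra. }
  assert (Hnz : f y <> RtoC 0) by (intros E; rewrite E, Cmod_0 in Hfy; lra).
  replace (Cminus (Cinv (f y)) (Cinv a))
    with (Cmult (Copp (Cminus (f y) a)) (Cinv (Cmult (f y) a))) by (field; auto).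
  rewrite Cmod_mult, Cmod_opp, Cmod_inv, Cmod_mult by (now apply Cmult_neq_0).
  apply (Rmult_lt_reg_r (Cmod (f y) * Cmod a)); [nra |].
  rewrite Rmult_assoc, Rinv_l by nra. rewrite Rmult_1_r.
  assert (0 < eps * ((Cmod (f y) - Cmod a / 2) * Cmod a))
    by (apply Rmult_lt_0_compat; [lra | apply Rmult_lt_0_compat; lra]).
  nra.
Qed.

(* Caratheodory's characterisation: it reduces the product and quotient rules to the continuity
   rules for [tends]. *)
Lemma has_deriv_within_slope D f f' x :
  has_deriv_within D f f' x <->
  exists s, tends D x s (f' x) /\
    near D x (fun y => f y = Cplus (f x) (Cmult (RtoC (y - x)) (s y))).
Proof.
  split.
  - intros Hf.
    exists (fun y => if Req_EM_T y x then f' x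
                     else Cmult (RtoC (/ (y - x))) (Cminus (f y) (f x))).
    split.
    + intros eps Heps.
      apply (near_impl D x (fun y => Cmod (Cminus (Cminus (f y) (f x)) (Cmult (RtoC (y - x)) (f' x)))
                                     <= eps / 2 * Rabs (y - x))); [| apply Hf; lra].
      intros y _ Hy. destruct (Req_EM_T y x) as [-> | Hyx].
      * replace (Cminus (f' x) (f' x)) with (RtoC 0) by ring. rewrite Cmod_0. lra.
      * assert (Hpos : 0 < Rabs (y - x)) by (apply Rabs_pos_lt; lra).
        replace (Cminus (Cmult (RtoC (/ (y - x))) (Cminus (f y) (f x))) (f' x))
          with (Cmult (RtoC (/ (y - x))) (Cminus (Cminus (f y) (f x)) (Cmult (RtoC (y - x)) (f' x)))).
        2:{ rewrite RtoC_inv by lra. field.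
            intros E. apply RtoC_inj in E. lra. }
        rewrite Cmod_mult, Cmod_R, Rabs_inv.
        apply (Rmult_lt_reg_l (Rabs (y - x))); auto.
        rewrite <- Rmult_assoc, Rinv_r, Rmult_1_l by lra. nra.
    + apply near_forall. intros y _. destruct (Req_EM_T y x) as [-> | Hyx].
      * replace (x - x) with 0 by ring. ring.
      * assert (RtoC (y - x) <> RtoC 0) by (intros E; apply RtoC_inj in E; lra).
        rewrite RtoC_inv by lra. field. auto.
  - intros [s [Hs Hf]] eps Heps.
    apply (near_impl D x (fun y => f y = Cplus (f x) (Cmult (RtoC (y - x)) (s y)) /\
                                  Cmod (Cminus (s y) (f' x)) < eps)).
    + intros y _ [E Hy]. rewrite E.
      replace (Cminus (Cminus (Cplus (f x) (Cmult (RtoC (y - x)) (s y))) (f x))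
                 (Cmult (RtoC (y - x)) (f' x)))
        with (Cmult (RtoC (y - x)) (Cminus (s y) (f' x))) by ring.
      rewrite Cmod_mult, Cmod_R, Rmult_comm.
      apply Rmult_le_compat_r; [apply Rabs_pos | lra].
    + now apply near_and, Hs.
Qed.

Lemma deriv_tends D f f' x : has_deriv_within D f f' x -> tends D x f (f x).
Proof.
  intros [s [Hs Hf]]%has_deriv_within_slope.
  assert (Hlin : tends D x (fun y => Cplus (f x) (Cmult (RtoC (y - x)) (s y)))
                           (Cplus (f x) (Cmult (RtoC 0) (f' x))))
    by (apply tends_plus; [apply tends_const | apply tends_mult; [apply tends_shift | exact Hs]]).
  replace (Cplus (f x) (Cmult (RtoC 0) (f' x))) with (f x) in Hlin by ring.
  revert Hlin. apply tends_ext. revert Hf. apply near_impl. auto.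
Qed.

Lemma cont_of_deriv D f f' : (forall x, D x -> has_deriv_within D f f' x) -> cont_within D f.
Proof. intros Hf x Dx. exact (deriv_tends D f f' x (Hf x Dx)). Qed.

Lemma deriv_ext D f f' g' x : g' x = f' x -> has_deriv_within D f f' x -> has_deriv_within D f g' x.
Proof. intros E H. unfold has_deriv_within. now rewrite E. Qed.

Lemma deriv_eq_on D f g f' x :
  D x -> (forall y, D y -> f y = g y) -> has_deriv_within D f f' x -> has_deriv_within D g f' x.
Proof.
  intros Dx E H eps Heps.
  apply (near_impl D x
    (fun y => Cmod (Cminus (Cminus (f y) (f x)) (Cmult (RtoC (y - x)) (f' x))) <= eps * Rabs (y - x))).
  - intros y Dy. now rewrite !E.
  - now apply H.
Qed.

Lemma deriv_const D (c : C) x : has_deriv_within D (fun _ => c) (fun _ => RtoC 0) x.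
Proof.
  apply has_deriv_within_slope. exists (fun _ => RtoC 0). split; [apply tends_const |].
  apply near_forall. intros y _. ring.
Qed.

Lemma deriv_affine D a b x : has_deriv_within D (fun y => RtoC (a * y + b)) (fun _ => RtoC a) x.
Proof.
  apply has_deriv_within_slope. exists (fun _ => RtoC a). split; [apply tends_const |].
  apply near_forall. intros y _. rewrite <- RtoC_mult, <- RtoC_plus. f_equal. ring.
Qed.

Lemma deriv_plus D f f' g g' x :
  has_deriv_within D f f' x -> has_deriv_within D g g' x ->
  has_deriv_within D (fun y => Cplus (f y) (g y)) (fun y => Cplus (f' y) (g' y)) x.
Proof.
  intros [s [Hs Ef]]%has_deriv_within_slope [t [Ht Eg]]%has_deriv_within_slope.
  apply has_deriv_within_slope. exists (fun y => Cplus (s y) (t y)).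
  split; [now apply tends_plus |].
  generalize (near_and _ _ _ _ Ef Eg). apply near_impl.
  intros y _ [E1 E2]. rewrite E1, E2. ring.
Qed.

Lemma deriv_mult D f f' g g' x :
  has_deriv_within D f f' x -> has_deriv_within D g g' x ->
  has_deriv_within D (fun y => Cmult (f y) (g y))
    (fun y => Cplus (Cmult (f' y) (g y)) (Cmult (f y) (g' y))) x.
Proof.
  intros Hf Hg. pose proof (deriv_tends _ _ _ _ Hg) as Hgc.
  apply has_deriv_within_slope in Hf as [s [Hs Ef]].
  apply has_deriv_within_slope in Hg as [t [Ht Eg]].
  apply has_deriv_within_slope.
  exists (fun y => Cplus (Cmult (s y) (g y)) (Cmult (f x) (t y))). split.
  - apply tends_plus; apply tends_mult; auto using tends_const.
  - generalize (near_and _ _ _ _ Ef Eg). apply near_impl.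
    intros y _ [E1 E2]. rewrite E1, E2. ring.
Qed.

Lemma deriv_inv D f f' x :
  f x <> RtoC 0 -> has_deriv_within D f f' x ->
  has_deriv_within D (fun y => Cinv (f y))
    (fun y => Copp (Cmult (f' y) (Cinv (Cmult (f y) (f y))))) x.
Proof.
  intros Hx Hf. pose proof (deriv_tends _ _ _ _ Hf) as Hfc.
  apply has_deriv_within_slope in Hf as [s [Hs Ef]].
  apply has_deriv_within_slope.
  exists (fun y => Copp (Cmult (s y) (Cinv (Cmult (f y) (f x))))). split.
  - apply tends_opp, tends_mult; [exact Hs |].
    apply tends_inv; [now apply Cmult_neq_0 |].
    apply tends_mult; [exact Hfc | apply tends_const].
  - assert (Hnz : near D x (fun y => f y <> RtoC 0)).
    { apply (near_impl D x (fun y => Cmod (Cminus (f y) (f x)) < Cmod (f x))).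
      - intros y _ Hy E. rewrite E in Hy.
        replace (Cminus (RtoC 0) (f x)) with (Copp (f x)) in Hy by ring.
        rewrite Cmod_opp in Hy. lra.
      - apply Hfc. now apply Cmod_gt_0. }
    generalize (near_and _ _ _ _ Ef Hnz). apply near_impl.
    intros y _ [E Hy].
    assert (Hslope : Cmult (RtoC (y - x)) (s y) = Cminus (f y) (f x)) by (rewrite E; ring).
    replace (Cmult (RtoC (y - x)) (Copp (Cmult (s y) (Cinv (Cmult (f y) (f x))))))
      with (Copp (Cmult (Cmult (RtoC (y - x)) (s y)) (Cinv (Cmult (f y) (f x))))) by ring.
    rewrite Hslope. field. auto.
Qed.

Lemma deriv_interior D f f' x :
  near everywhere x D -> has_deriv_within D f f' x -> has_deriv_within everywhere f f' x.
Proof. intros HD Hf eps Heps. apply (near_restrict D); [exact HD | now apply Hf]. Qed.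

Lemma deriv_of_components D (f f' : R -> C) x :
  is_derive (fun y => fst (f y)) x (fst (f' x)) ->
  is_derive (fun y => snd (f y)) x (snd (f' x)) ->
  has_deriv_within D f f' x.
Proof.
  intros H1 H2 eps Heps.
  assert (Heps2 : 0 < eps / 2) by lra.
  destruct (proj2 H1 x (fun P HP => HP) (mkposreal _ Heps2)) as [d1 Hd1].
  destruct (proj2 H2 x (fun P HP => HP) (mkposreal _ Heps2)) as [d2 Hd2].
  exists (Rmin d1 d2). split; [apply Rmin_pos; apply cond_pos |].
  intros y _ Hy.
  specialize (Hd1 y (Rlt_le_trans _ _ _ Hy (Rmin_l _ _))).
  specialize (Hd2 y (Rlt_le_trans _ _ _ Hy (Rmin_r _ _))).
  change (Rabs (fst (f y) - fst (f x) - (y - x) * fst (f' x)) <= eps / 2 * Rabs (y - x)) in Hd1.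
  change (Rabs (snd (f y) - snd (f x) - (y - x) * snd (f' x)) <= eps / 2 * Rabs (y - x)) in Hd2.
  set (c := Cminus (Cminus (f y) (f x)) (Cmult (RtoC (y - x)) (f' x))).
  assert (Hc : Rmax (Rabs (fst c)) (Rabs (snd c)) <= eps / 2 * Rabs (y - x)).
  { apply Rmax_lub; unfold c; simpl.
    - eapply Rle_trans; [| exact Hd1]. right. apply f_equal. ring.
    - eapply Rle_trans; [| exact Hd2]. right. apply f_equal. ring. }
  assert (Hsqrt2 : sqrt 2 <= 2).
  { rewrite <- (sqrt_square 2) at 2 by lra. apply sqrt_le_1_alt. lra. }
  assert (0 <= Rmax (Rabs (fst c)) (Rabs (snd c)))
    by (eapply Rle_trans; [apply Rabs_pos | apply Rmax_l]).
  apply (Rle_trans _ _ _ (Cmod_2Rmax c)). generalize (sqrt_pos 2). nra.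
Qed.

Lemma deriv_eix D a b x :
  has_deriv_within D (fun y => eix (a * y + b))
    (fun y => Cmult (Cmult Ci (RtoC a)) (eix (a * y + b))) x.
Proof.
  apply deriv_of_components; unfold eix; simpl.
  - auto_derive; auto. ring.
  - auto_derive; auto. ring.
Qed.

Lemma continuous_components (g : R -> C) x :
  tends everywhere x g (g x) ->
  continuous (fun y => fst (g y)) x /\ continuous (fun y => snd (g y)) x.
Proof.
  intros Hg.
  assert (Hnear : forall (p : C -> R), (forall c, Rabs (p c) <= Cmod c) ->
            (forall c d, p (Cminus c d) = p c - p d) -> continuous (fun y => p (g y)) x).
  { intros p Hp Hlin. apply (filterlim_locally (F := locally x)). intros eps.
    destruct (Hg eps (cond_pos eps)) as [d [Hd H]]. exists (mkposreal d Hd).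
    intros y Hy. change (Rabs (p (g y) - p (g x)) < eps).
    rewrite <- Hlin. eapply Rle_lt_trans; [apply Hp | exact (H y I Hy)]. }
  split; apply Hnear; intros; simpl; try ring.
  - eapply Rle_trans; [apply Rmax_l | apply Rmax_Cmod].
  - eapply Rle_trans; [apply Rmax_r | apply Rmax_Cmod].
Qed.

(* Taken componentwise, as [is_RInt] on [C] in the statement lives in the product module [R * R]. *)
Definition antiderivative (g : R -> C) (y : R) : C :=
  (RInt (fun t => fst (g t)) (-1) y, RInt (fun t => snd (g t)) (-1) y).

Lemma deriv_antiderivative D g x :
  (forall y, tends everywhere y g (g y)) -> has_deriv_within D (antiderivative g) g x.
Proof.
  intros Hg.
  assert (Hc : forall y, continuous (fun t => fst (g t)) y /\ continuous (fun t => snd (g t)) y)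
    by (intros; now apply continuous_components).
  apply deriv_of_components; unfold antiderivative; simpl.
  - apply (is_derive_RInt (fun t => fst (g t)) _ (-1)); [| apply Hc].
    apply filter_forall. intros y. apply (RInt_correct (V := R_CompleteNormedModule)).
    apply ex_RInt_continuous. intros. apply Hc.
  - apply (is_derive_RInt (fun t => snd (g t)) _ (-1)); [| apply Hc].
    apply filter_forall. intros y. apply (RInt_correct (V := R_CompleteNormedModule)).
    apply ex_RInt_continuous. intros. apply Hc.
Qed.

Lemma antiderivative_start g : antiderivative g (-1) = RtoC 0.
Proof. unfold antiderivative. now rewrite !RInt_point. Qed.

Lemma tends_on_piece D f g x :
  D x -> (forall y, D y -> g y = f y) -> tends D x f (f x) -> tends D x g (g x).
Proof.
  intros Dx E Hf. rewrite E by exact Dx.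
  apply (tends_ext D x f); [apply near_forall; intros; symmetry; auto | exact Hf].
Qed.

Lemma deriv_on_piece D f g f' g' x :
  D x -> (forall y, D y -> g y = f y) -> g' x = f' x ->
  has_deriv_within D f f' x -> has_deriv_within D g g' x.
Proof.
  intros Dx E E' Hf. apply (deriv_ext D g f'); [exact E' |].
  apply (deriv_eq_on D f); auto. intros; symmetry; auto.
Qed.

Definition piecewise (fl fm fr : R -> C) (y : R) : C :=
  if Rle_dec (Rabs y) 1 then fm y else if Rle_dec y 0 then fl y else fr y.

Lemma piecewise_mid fl fm fr y : Icc11 y -> piecewise fl fm fr y = fm y.
Proof.
  unfold Icc11, piecewise. intros Hy. destruct (Rle_dec (Rabs y) 1) as [_ | H]; auto.
  exfalso. apply H, Rabs_le. lra.
Qed.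

Lemma piecewise_left fl fm fr y : fm (-1) = fl (-1) -> Iicm1 y -> piecewise fl fm fr y = fl y.
Proof.
  unfold Iicm1, piecewise. intros E Hy. rewrite Rabs_left1 by lra.
  destruct (Rle_dec (- y) 1); [replace y with (-1) by lra; exact E |].
  destruct (Rle_dec y 0); [reflexivity | lra].
Qed.

Lemma piecewise_right fl fm fr y : fm 1 = fr 1 -> Ici1 y -> piecewise fl fm fr y = fr y.
Proof.
  unfold Ici1, piecewise. intros E Hy. rewrite Rabs_right by lra.
  destruct (Rle_dec y 1); [replace y with 1 by lra; exact E |].
  destruct (Rle_dec y 0); [lra | reflexivity].
Qed.

Lemma C1_piecewise fl fm fr fl' fm' fr' :
  fm (-1) = fl (-1) -> fm 1 = fr 1 -> fm' (-1) = fl' (-1) -> fm' 1 = fr' 1 ->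
  (forall x, Iicm1 x -> has_deriv_within Iicm1 fl fl' x) -> cont_within Iicm1 fl' ->
  (forall x, Icc11 x -> has_deriv_within Icc11 fm fm' x) -> cont_within Icc11 fm' ->
  (forall x, Ici1 x -> has_deriv_within Ici1 fr fr' x) -> cont_within Ici1 fr' ->
  C1_with (piecewise fl fm fr) (piecewise fl' fm' fr').
Proof.
  intros El Er El' Er' HL HLc HM HMc HR HRc. split.
  - intros x eps Heps. apply near_glue; intros Hx.
    + refine (deriv_on_piece Iicm1 fl _ fl' _ x Hx _ _ (HL x Hx) eps Heps);
        auto using piecewise_left.
    + refine (deriv_on_piece Icc11 fm _ fm' _ x Hx _ _ (HM x Hx) eps Heps);
        auto using piecewise_mid.
    + refine (deriv_on_piece Ici1 fr _ fr' _ x Hx _ _ (HR x Hx) eps Heps);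
        auto using piecewise_right.
  - intros x _ eps Heps. apply near_glue; intros Hx.
    + refine (tends_on_piece Iicm1 fl' _ x Hx _ (HLc x Hx) eps Heps); auto using piecewise_left.
    + refine (tends_on_piece Icc11 fm' _ x Hx _ (HMc x Hx) eps Heps); auto using piecewise_mid.
    + refine (tends_on_piece Ici1 fr' _ x Hx _ (HRc x Hx) eps Heps); auto using piecewise_right.
Qed.

(* Precomposing with [clamp] extends a function continuous on [-1,1] to a continuous function on
   R, so that Coquelicot's two-sided fundamental theorem of calculus applies up to the endpoints. *)
Definition clamp (y : R) : R := Rmax (-1) (Rmin 1 y).

Lemma clamp_Icc11 y : Icc11 (clamp y).
Proof. unfold clamp, Icc11, Rmax, Rmin. repeat destruct Rle_dec; lra. Qed.

Lemma clamp_id y : Icc11 y -> clamp y = y.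
Proof. unfold clamp, Icc11, Rmax, Rmin. intros. repeat destruct Rle_dec; lra. Qed.

Lemma clamp_lipschitz x y : Rabs (clamp y - clamp x) <= Rabs (y - x).
Proof.
  unfold clamp, Rmax, Rmin. repeat destruct Rle_dec; unfold Rabs; repeat destruct Rcase_abs; lra.
Qed.

Lemma tends_clamp f x :
  cont_within Icc11 f -> tends everywhere x (fun y => f (clamp y)) (f (clamp x)).
Proof.
  intros Hf eps Heps. destruct (Hf (clamp x) (clamp_Icc11 x) eps Heps) as [d [Hd H]].
  exists d. split; auto. intros y _ Hy. apply H; [apply clamp_Icc11 |].
  eapply Rle_lt_trans; [apply clamp_lipschitz | exact Hy].
Qed.

Lemma deriv_piecewise_interior fl fm fr fm' x :
  Rabs x < 1 -> has_deriv_within Icc11 fm fm' x ->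
  has_deriv_within everywhere (piecewise fl fm fr) fm' x.
Proof.
  intros Hx Hf. apply Rabs_def2 in Hx.
  apply (deriv_interior Icc11).
  - exists (Rmin (1 - x) (1 + x)). split; [apply Rmin_pos; lra |].
    intros y _ Hy. apply Rabs_def2 in Hy. generalize (Rmin_l (1 - x) (1 + x)) (Rmin_r (1 - x) (1 + x)).
    unfold Icc11. lra.
  - apply (deriv_on_piece Icc11 fm _ fm'); auto using piecewise_mid. unfold Icc11. lra.
Qed.

Lemma eix_add a b : eix (a + b) = Cmult (eix a) (eix b).
Proof. unfold eix, Cmult; simpl. rewrite cos_plus, sin_plus. f_equal; ring. Qed.

Lemma eix_0 : eix 0 = RtoC 1.
Proof. unfold eix. now rewrite cos_0, sin_0. Qed.

(* On the half-line where |y| = s y (s = 1 or -1), [wave k0 s y] is e^{i k0 (|y|-1)} and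
   [outgoing k0 s c y] is (i(|y|-1) + c) e^{i k0 (|y|-1)}. *)
Definition wave (k0 s y : R) : C := eix (k0 * s * y + - k0).

Definition wave' (k0 s y : R) : C := Cmult (Cmult Ci (RtoC (k0 * s))) (wave k0 s y).

Lemma deriv_wave D k0 s x : has_deriv_within D (wave k0 s) (wave' k0 s) x.
Proof. apply deriv_eix. Qed.

Ltac differentiate :=
  repeat first [ apply deriv_plus | apply deriv_mult | apply deriv_const
               | apply deriv_affine | apply deriv_wave ].

Lemma wave_at_end k0 s : s * s = 1 -> wave k0 s s = RtoC 1.
Proof.
  intros Hs. unfold wave. rewrite Rmult_assoc, Hs, <- eix_0. f_equal. ring.
Qed.

Lemma wave_form k0 s y : Rabs y = s * y -> wave k0 s y = Cmult (eix (- k0)) (eix (k0 * Rabs y)).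
Proof. intros Hy. unfold wave. rewrite <- eix_add, Hy. f_equal. ring. Qed.

Definition outgoing (k0 s : R) (c : C) (y : R) : C :=
  Cmult (Cplus (Cmult Ci (RtoC (s * y + -1))) c) (wave k0 s y).

Definition outgoing' (k0 s : R) (c : C) (y : R) : C :=
  Cplus (Cmult (Cmult Ci (RtoC s)) (wave k0 s y))
        (Cmult (Cplus (Cmult Ci (RtoC (s * y + -1))) c) (wave' k0 s y)).

Lemma deriv_outgoing D k0 s c x : has_deriv_within D (outgoing k0 s c) (outgoing' k0 s c) x.
Proof.
  unfold outgoing. eapply deriv_ext; [| differentiate]. unfold outgoing', wave'. ring.
Qed.

Lemma cont_wave' D k0 s : cont_within D (wave' k0 s).
Proof. eapply cont_of_deriv. intros x _. unfold wave'. differentiate. Qed.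

Lemma cont_outgoing' D k0 s c : cont_within D (outgoing' k0 s c).
Proof. eapply cont_of_deriv. intros x _. unfold outgoing', wave'. differentiate. Qed.

Lemma outgoing_form k0 s c y :
  Rabs y = s * y ->
  outgoing k0 s c y =
  Cmult (Cplus (Cmult (Cmult Ci (eix (- k0))) (RtoC (Rabs y))) (Cmult (eix (- k0)) (Cminus c Ci)))
        (eix (k0 * Rabs y)).
Proof.
  intros Hy. unfold outgoing. rewrite (wave_form k0 s y Hy).
  replace (s * y + -1) with (Rabs y + -1) by lra. rewrite RtoC_plus. ring.
Qed.

Section ReductionOfOrder.

Variables (k0 : R) (z z1 z2 : R -> C).
Hypothesis z_deriv : forall x, Icc11 x -> has_deriv_within Icc11 z z1 x.
Hypothesis z1_deriv : forall x, Icc11 x -> has_deriv_within Icc11 z1 z2 x.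
Hypothesis z_neq0 : forall x, Icc11 x -> z x <> RtoC 0.

Let zsq (y : R) : C := Cmult (z y) (z y).

Lemma cont_z : cont_within Icc11 z.
Proof. exact (cont_of_deriv _ _ _ z_deriv). Qed.

Definition sq_integral : R -> C := antiderivative (fun y => zsq (clamp y)).

(* [wronskian] and [ratio] are the functions W and v of the proof idea; [phi_mid] is phi on [-1,1]. *)
Definition wronskian (y : R) : C :=
  Cplus (Copp Ci) (Cmult (RtoC (-2 * k0)) (sq_integral y)).

Definition ratio : R -> C :=
  antiderivative (fun y => Cmult (wronskian (clamp y)) (Cinv (zsq (clamp y)))).

Lemma deriv_wronskian D x :
  has_deriv_within D wronskian (fun y => Cmult (RtoC (-2 * k0)) (zsq (clamp y))) x.
Proof.
  unfold wronskian. eapply deriv_ext; [| apply deriv_plus; [apply deriv_const | apply deriv_mult];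
    [apply deriv_const | apply deriv_antiderivative]].
  - cbv beta. ring.
  - intros y. apply tends_clamp. intros t Ht. unfold zsq. apply tends_mult; exact (cont_z t Ht).
Qed.

Lemma deriv_ratio D x :
  has_deriv_within D ratio (fun y => Cmult (wronskian (clamp y)) (Cinv (zsq (clamp y)))) x.
Proof.
  apply deriv_antiderivative. intros y.
  apply (tends_clamp (fun t => Cmult (wronskian t) (Cinv (zsq t)))). intros t Ht.
  apply tends_mult; [exact (deriv_tends _ _ _ _ (deriv_wronskian Icc11 t)) |].
  apply tends_inv; [unfold zsq; apply Cmult_neq_0; now apply z_neq0 |].
  apply tends_mult; exact (cont_z t Ht).
Qed.

Definition phi_mid (y : R) : C := Cmult (z y) (ratio y).
Definition phi_mid' (y : R) : C := Cplus (Cmult (z1 y) (ratio y)) (Cmult (wronskian y) (Cinv (z y))).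
Definition phi_mid'' (y : R) : C := Cplus (Cmult (z2 y) (ratio y)) (Cmult (RtoC (-2 * k0)) (z y)).

Lemma deriv_phi_mid x : Icc11 x -> has_deriv_within Icc11 phi_mid phi_mid' x.
Proof.
  intros Hx. unfold phi_mid.
  eapply deriv_ext; [| apply deriv_mult; [now apply z_deriv | apply deriv_ratio]].
  unfold phi_mid', zsq. cbv beta. rewrite clamp_id by exact Hx. field. now apply z_neq0.
Qed.

Lemma deriv_phi_mid' x : Icc11 x -> has_deriv_within Icc11 phi_mid' phi_mid'' x.
Proof.
  intros Hx. unfold phi_mid'.
  eapply deriv_ext; [| apply deriv_plus; apply deriv_mult;
    [now apply z1_deriv | apply deriv_ratio | apply deriv_wronskian
    | apply deriv_inv; [now apply z_neq0 | now apply z_deriv]]].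
  unfold phi_mid'', zsq. cbv beta. rewrite clamp_id by exact Hx. field. now apply z_neq0.
Qed.

Hypothesis k0_neq0 : k0 <> 0.
Hypotheses (z_end : z 1 = RtoC 1) (z_start : z (-1) = RtoC 1).
Hypotheses (z1_end : z1 1 = Cmult Ci (RtoC k0)) (z1_start : z1 (-1) = Copp (Cmult Ci (RtoC k0))).
Hypothesis zsq_integral : is_RInt zsq (-1) 1 (Cinv (Cmult Ci (RtoC k0))).

Lemma wronskian_start : wronskian (-1) = Copp Ci.
Proof. unfold wronskian, sq_integral. rewrite antiderivative_start. ring. Qed.

Lemma sq_integral_end : sq_integral 1 = Cinv (Cmult Ci (RtoC k0)).
Proof.
  assert (Hclamp : forall t, Rmin (-1) 1 < t < Rmax (-1) 1 -> zsq t = zsq (clamp t)).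
  { intros t Ht. rewrite Rmin_left, Rmax_right in Ht by lra.
    rewrite clamp_id; auto. unfold Icc11. lra. }
  destruct (Cinv (Cmult Ci (RtoC k0))) as [p q].
  unfold sq_integral, antiderivative. f_equal; apply (is_RInt_unique (V := R_CompleteNormedModule)).
  - apply is_RInt_fct_extend_fst in zsq_integral.
    eapply is_RInt_ext; [| exact zsq_integral]. intros t Ht. cbv beta. now rewrite (Hclamp t Ht).
  - apply is_RInt_fct_extend_snd in zsq_integral.
    eapply is_RInt_ext; [| exact zsq_integral]. intros t Ht. cbv beta. now rewrite (Hclamp t Ht).
Qed.

Let k0_neq0_C : RtoC k0 <> RtoC 0.
Proof. intros E. now apply RtoC_inj in E. Qed.

Lemma wronskian_end : wronskian 1 = Ci.
Proof.
  unfold wronskian. rewrite sq_integral_end.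
  replace (Cinv (Cmult Ci (RtoC k0))) with (Cmult (Cinv Ci) (Cinv (RtoC k0)))
    by (field; split; [exact k0_neq0_C | exact Ci_nz]).
  rewrite Ci_inv. replace (-2 * k0) with (- (2 * k0)) by ring. rewrite RtoC_opp, RtoC_mult.
  field. exact k0_neq0_C.
Qed.

Lemma ratio_start : ratio (-1) = RtoC 0.
Proof. apply antiderivative_start. Qed.

Let wave_start : wave k0 (-1) (-1) = RtoC 1.
Proof. apply wave_at_end. ring. Qed.

Let wave_end : wave k0 1 1 = RtoC 1.
Proof. apply wave_at_end. ring. Qed.

Lemma phi_mid_start : phi_mid (-1) = outgoing k0 (-1) (RtoC 0) (-1).
Proof.
  unfold phi_mid, outgoing. rewrite z_start, ratio_start, wave_start.
  replace (-1 * -1 + -1) with 0 by ring. ring.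
Qed.

Lemma phi_mid_end : phi_mid 1 = outgoing k0 1 (ratio 1) 1.
Proof.
  unfold phi_mid, outgoing. rewrite z_end, wave_end. replace (1 * 1 + -1) with 0 by ring. ring.
Qed.

Lemma phi_mid'_start : phi_mid' (-1) = outgoing' k0 (-1) (RtoC 0) (-1).
Proof.
  unfold phi_mid', outgoing', wave'. rewrite z1_start, ratio_start, wronskian_start, z_start, wave_start.
  replace (-1 * -1 + -1) with 0 by ring. field.
Qed.

Lemma phi_mid'_end : phi_mid' 1 = outgoing' k0 1 (ratio 1) 1.
Proof.
  unfold phi_mid', outgoing', wave'. rewrite z1_end, wronskian_end, z_end, wave_end.
  replace (1 * 1 + -1) with 0 by ring. rewrite Rmult_1_r. field.
Qed.

Definition phi : R -> C :=
  piecewise (outgoing k0 (-1) (RtoC 0)) phi_mid (outgoing k0 1 (ratio 1)).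
Definition phi' : R -> C :=
  piecewise (outgoing' k0 (-1) (RtoC 0)) phi_mid' (outgoing' k0 1 (ratio 1)).

Lemma phi_C1 : C1_with phi phi'.
Proof.
  apply C1_piecewise; auto using phi_mid_start, phi_mid_end, phi_mid'_start, phi_mid'_end,
    deriv_outgoing, cont_outgoing', deriv_phi_mid.
  exact (cont_of_deriv _ _ _ deriv_phi_mid').
Qed.

Lemma psi_piecewise y : psi_of k0 z y = piecewise (wave k0 (-1)) z (wave k0 1) y.
Proof.
  unfold psi_of, piecewise, wave. destruct (Rle_dec (Rabs y) 1) as [_ | Hy]; [reflexivity |].
  destruct (Rle_dec y 0).
  - rewrite Rabs_left1 by lra. f_equal. ring.
  - rewrite Rabs_right by lra. f_equal. ring.
Qed.

Definition psi' : R -> C := piecewise (wave' k0 (-1)) z1 (wave' k0 1).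

Lemma psi_C1 : C1_with (psi_of k0 z) psi'.
Proof.
  assert (H : C1_with (piecewise (wave k0 (-1)) z (wave k0 1)) psi').
  { apply C1_piecewise; unfold wave'.
    - now rewrite z_start, wave_start.
    - now rewrite z_end, wave_end.
    - rewrite z1_start, wave_start. replace (k0 * -1) with (- k0) by ring. rewrite RtoC_opp. ring.
    - rewrite z1_end, wave_end, Rmult_1_r. ring.
    - intros; apply deriv_wave.
    - apply cont_wave'.
    - exact z_deriv.
    - exact (cont_of_deriv _ _ _ z1_deriv).
    - intros; apply deriv_wave.
    - apply cont_wave'. }
  destruct H as [Hd Hc]. split; [| exact Hc].
  intros x. apply (deriv_eq_on everywhere (piecewise (wave k0 (-1)) z (wave k0 1))); auto.
  - exact I.
  - intros y _. symmetry. apply psi_piecewise.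
Qed.

Lemma psi_equation x :
  Rabs x < 1 ->
  has_deriv_within everywhere psi' z2 x /\
  Cplus (Copp (z2 x)) (Cmult (U_of k0 z z2 x) (psi_of k0 z x)) = Cmult (RtoC (k0 ^ 2)) (psi_of k0 z x).
Proof.
  intros Hx. assert (Ix : Icc11 x) by (apply Rabs_def2 in Hx; unfold Icc11; lra). split.
  - apply deriv_piecewise_interior; auto.
  - rewrite psi_piecewise, piecewise_mid by exact Ix. unfold U_of.
    destruct (Rlt_dec (Rabs x) 1); [| contradiction].
    field. now apply z_neq0.
Qed.

Lemma phi_equation x :
  Rabs x < 1 ->
  has_deriv_within everywhere phi' phi_mid'' x /\
  Cminus (Cplus (Copp (phi_mid'' x)) (Cmult (U_of k0 z z2 x) (phi x))) (Cmult (RtoC (k0 ^ 2)) (phi x))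
    = Cmult (RtoC (2 * k0)) (psi_of k0 z x).
Proof.
  intros Hx. assert (Ix : Icc11 x) by (apply Rabs_def2 in Hx; unfold Icc11; lra). split.
  - apply deriv_piecewise_interior; auto using deriv_phi_mid'.
  - unfold phi. rewrite psi_piecewise, !piecewise_mid by exact Ix. unfold U_of, phi_mid, phi_mid''.
    destruct (Rlt_dec (Rabs x) 1); [| contradiction].
    replace (-2 * k0) with (- (2 * k0)) by ring. rewrite RtoC_opp.
    field. now apply z_neq0.
Qed.

Lemma psi_outside x : 1 <= Rabs x -> psi_of k0 z x = Cmult (eix (- k0)) (eix (k0 * Rabs x)).
Proof.
  intros Hx. rewrite psi_piecewise. destruct (Rle_dec 0 x).
  - rewrite Rabs_right in Hx by lra. rewrite piecewise_right.
    + apply wave_form. rewrite Rabs_right; lra.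
    + now rewrite z_end, wave_end.
    + unfold Ici1. lra.
  - rewrite Rabs_left in Hx by lra. rewrite piecewise_left.
    + apply wave_form. rewrite Rabs_left; lra.
    + now rewrite z_start, wave_start.
    + unfold Iicm1. lra.
Qed.

Lemma phi_outside_right x :
  1 <= x ->
  phi x = Cmult (Cplus (Cmult (Cmult Ci (eix (- k0))) (RtoC (Rabs x)))
                       (Cmult (eix (- k0)) (Cminus (ratio 1) Ci))) (eix (k0 * Rabs x)).
Proof.
  intros Hx. unfold phi. rewrite piecewise_right by (exact phi_mid_end || exact Hx).
  apply outgoing_form. rewrite Rabs_right; lra.
Qed.

Lemma phi_outside_left x :
  x <= -1 ->
  phi x = Cmult (Cplus (Cmult (Cmult Ci (eix (- k0))) (RtoC (Rabs x)))
                       (Cmult (eix (- k0)) (Cminus (RtoC 0) Ci))) (eix (k0 * Rabs x)).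
Proof.
  intros Hx. unfold phi. rewrite piecewise_left by (exact phi_mid_start || exact Hx).
  apply outgoing_form. rewrite Rabs_left; lra.
Qed.

End ReductionOfOrder.

Theorem mainTheorem3 (k0 : R) (z z1 z2 : R -> C) :
  k0 <> 0 ->
  (* z in C^2([-1,1]) with first derivative z1 and second derivative z2 *)
  (forall x, Icc11 x -> has_deriv_within Icc11 z z1 x) ->
  (forall x, Icc11 x -> has_deriv_within Icc11 z1 z2 x) ->
  cont_within Icc11 z2 ->
  (forall x, Icc11 x -> z x <> RtoC 0) ->
  z 1 = RtoC 1 -> z (-1) = RtoC 1 ->
  z1 1 = Cmult Ci (RtoC k0) -> z1 (-1) = Copp (Cmult Ci (RtoC k0)) ->
  is_RInt (fun x => Cmult (z x) (z x)) (-1) 1 (Cinv (Cmult Ci (RtoC k0))) ->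
  let U := U_of k0 z z2 in
  let psi := psi_of k0 z in
  let alpha := eix (- k0) in
  (* psi is a nontrivial C^1 solution with the prescribed outgoing form *)
  ((exists psi1 psi2 : R -> C,
      C1_with psi psi1 /\
      (forall x, Rabs x < 1 ->
         has_deriv_within everywhere psi1 psi2 x /\
         Cplus (Copp (psi2 x)) (Cmult (U x) (psi x))
           = Cmult (RtoC (k0 ^ 2)) (psi x))) /\
   (forall x, 1 <= x -> psi x = Cmult alpha (eix (k0 * Rabs x))) /\
   (forall x, x <= -1 -> psi x = Cmult alpha (eix (k0 * Rabs x))) /\
   (exists x, psi x <> RtoC 0)) /\
  (* second order: the inhomogeneous problem has a C^1(R) solution *)
  (exists (beta_p beta_m : C) (phi phi1 phi2 : R -> C),
      C1_with phi phi1 /\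
      (forall x, Rabs x < 1 ->
         has_deriv_within everywhere phi1 phi2 x /\
         Cminus (Cplus (Copp (phi2 x)) (Cmult (U x) (phi x)))
                (Cmult (RtoC (k0 ^ 2)) (phi x))
           = Cmult (RtoC (2 * k0)) (psi x)) /\
      (forall x, 1 <= x ->
         phi x = Cmult (Cplus (Cmult (Cmult Ci alpha) (RtoC (Rabs x))) beta_p)
                       (eix (k0 * Rabs x))) /\
      (forall x, x <= -1 ->
         phi x = Cmult (Cplus (Cmult (Cmult Ci alpha) (RtoC (Rabs x))) beta_m)
                       (eix (k0 * Rabs x)))).
Proof.
  intros Hk Hz Hz1 _ Hnz Hp Hm Hp1 Hm1 HI U psi alpha.
  split.
  - split; [| split; [| split]].
    + exists (psi' k0 z1), z2. split; [now apply (psi_C1 k0 z z1 z2) |].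
      intros x Hx. now apply psi_equation.
    + intros x Hx. apply psi_outside; auto. rewrite Rabs_right; lra.
    + intros x Hx. apply psi_outside; auto. rewrite Rabs_left; lra.
    + exists 0. unfold psi, psi_of. rewrite Rabs_R0.
      destruct (Rle_dec 0 1); [apply Hnz; unfold Icc11 | ]; lra.
  - exists (Cmult alpha (Cminus (ratio k0 z 1) Ci)), (Cmult alpha (Cminus (RtoC 0) Ci)),
      (phi k0 z), (phi' k0 z z1), (phi_mid'' k0 z z2).
    split; [| split; [| split]].
    + now apply (phi_C1 k0 z z1 z2).
    + intros x Hx. now apply phi_equation.
    + intros x Hx. now apply phi_outside_right.
    + intros x Hx. now apply phi_outside_left.
Qed.
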